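(* Let $X$ be a Fréchet space whose topology is induced by a finite or countably infinite separating set $\{p_n:n\in P\}$ of seminorms. Let $I$ be a finite or countably infinite index set; for each $i\in I$ let $\{q_{i,j}: j\in J_i\}$ be a set (of arbitrary cardinality) of continuous seminorms on $X$ and let $w_i:J_i\to\mathbb{R}_{\geq 0}$ be a function. Let \[ X_I=\{x\in X: \sup_{j\in J_i} w_i(j)q_{i,j}(x)<\infty \text{ for all } i\in I\}. \] Then $X_I$ is a linear subspace of $X$, and for each $i\in I$ the map $q_i:X_I\to\mathbb{R}_{\geq 0}$, $q_i(x)=\sup_{j\in J_i} w_i(j)q_{i,j}(x)$, is a seminorm on $X_I$. Moreover, $X_I$ is a Fréchet space when supplied with the locally convex topology induced by the separating family $\{p_n:n\in P\}\cup\{q_i:i\in I\}$; this topology does not depend on the choice of the family $\{p_n:n\in P\}$ inducing the topology of $X$; and the inclusion map $X_I\subset X$ is continuous. *)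

From HB Require Import structures.
From mathcomp Require Import all_boot all_order all_algebra.
From mathcomp Require Import boolp classical_sets functions cardinality reals.

Set Implicit Arguments.
Unset Strict Implicit.
Unset Printing Implicit Defensive.

Import Order.TTheory GRing.Theory Num.Theory.
Local Open Scope ring_scope.
Local Open Scope classical_set_scope.

Section SeminormTopology.
Variables (R : realType) (V : lmodType R).

Definition is_subspace (S : set V) : Prop :=
  [/\ S 0,
      (forall x y, S x -> S y -> S (x + y)) &
      (forall (a : R) x, S x -> S (a *: x))].

Definition seminorm_on (S : set V) (p : V -> R) : Prop :=
  [/\ (forall x, S x -> 0 <= p x),
      (forall x y, S x -> S y -> p (x + y) <= p x + p y) &
      (forall (a : R) x, S x -> p (a *: x) = `|a| * p x)].

Definition separating_on (S : set V) (P : Type) (p : P -> V -> R) : Prop :=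
  forall x, S x -> (forall n, p n x = 0) -> x = 0.

Definition sn_nbhs (S : set V) (P : Type) (p : P -> V -> R) (x : V)
    (A : set V) : Prop :=
  exists F : set P, finite_set F /\
  exists e : R, 0 < e /\
    forall y, S y -> (forall n, F n -> p n (y - x) < e) -> A y.

Definition sn_open (S : set V) (P : Type) (p : P -> V -> R) (A : set V) : Prop :=
  A `<=` S /\ forall x, A x -> sn_nbhs S p x A.

Definition sn_continuous_real (S : set V) (P : Type) (p : P -> V -> R)
    (f : V -> R) : Prop :=
  forall x, S x -> forall e : R, 0 < e ->
    sn_nbhs S p x (fun y => `|f y - f x| < e).

Definition sn_continuous (S T : set V) (P P' : Type)
    (p : P -> V -> R) (p' : P' -> V -> R) (f : V -> V) : Prop :=
  (forall x, S x -> T (f x)) /\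
  forall x, S x -> forall B, sn_nbhs T p' (f x) B ->
    sn_nbhs S p x (fun y => B (f y)).

Definition sn_complete (S : set V) (P : Type) (p : P -> V -> R) : Prop :=
  forall u : nat -> V, (forall k, S (u k)) ->
    (forall n (e : R), 0 < e -> exists N, forall k l, (N <= k)%N -> (N <= l)%N ->
        p n (u k - u l) < e) ->
    exists x, S x /\
      forall n (e : R), 0 < e -> exists N, forall k, (N <= k)%N -> p n (u k - x) < e.

(* S, with the locally convex topology induced by the countable (finite or
   countably infinite) family p of seminorms, is a Frechet space: p consists
   of seminorms on the subspace S, separates points, and S is complete
   (metrizability follows from countability of the family). *)
Definition frechet_on (S : set V) (P : countType) (p : P -> V -> R) : Prop :=
  [/\ is_subspace S, (forall n, seminorm_on S (p n)),
      separating_on S p & sn_complete S p].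

Definition fam_union (P I : Type) (p : P -> V -> R) (q : I -> V -> R) :
    P + I -> V -> R :=
  fun k => match k with inl n => p n | inr i => q i end.

Definition X_I (I : Type) (J : I -> Type) (w : forall i, J i -> R)
    (q : forall i, J i -> V -> R) : set V :=
  fun x => forall i, exists M : R, forall j : J i, w i j * q i j x <= M.

Definition q_sup (I : Type) (J : I -> Type) (w : forall i, J i -> R)
    (q : forall i, J i -> V -> R) (i : I) (x : V) : R :=
  sup (range (fun j : J i => w i j * q i j x)).

End SeminormTopology.

From HB Require Import structures.
From mathcomp Require Import all_boot all_order all_algebra.
From mathcomp Require Import boolp classical_sets functions cardinality reals.
From mathcomp Require Import lra.

(* A Cauchy sequence of X_I is Cauchy in X, hence has a limit x there.  For
   fixed i and k, l >= N, w_i(j) q_{i,j}(u_k - u_l) < e uniformly in j,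
   while q_{i,j}(u_l - x) -> 0 for each j by continuity of q_{i,j} on X; so
   w_i(j) q_{i,j}(u_k - x) <= e uniformly in j, which shows both x \in X_I and
   q_i(u_k - x) -> 0.  Topology independence holds because two families
   inducing the same topology on X dominate each other (each seminorm of one
   is controlled near 0 by finitely many of the other), and domination is
   preserved when the same q_i are added to both families. *)

Set Implicit Arguments.
Unset Strict Implicit.
Unset Printing Implicit Defensive.

Import Order.TTheory GRing.Theory Num.Theory.
Local Open Scope ring_scope.
Local Open Scope classical_set_scope.

Section Seminorms.
Variables (R : realType) (V : lmodType R).

Lemma seminorm0 (r : V -> R) : seminorm_on [set: V] r -> r 0 = 0.
Proof. by case=> _ _ hZ; rewrite -(scale0r (0 : V)) hZ // normr0 mul0r. Qed.

Lemma seminormN (r : V -> R) x : seminorm_on [set: V] r -> r (- x) = r x.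
Proof. by case=> _ _ hZ; rewrite -scaleN1r hZ // normrN1 mul1r. Qed.

Lemma seminormBC (r : V -> R) x y :
  seminorm_on [set: V] r -> r (x - y) = r (y - x).
Proof. by move=> hr; rewrite -opprB seminormN. Qed.

Lemma seminormB_le (r : V -> R) x y z :
  seminorm_on [set: V] r -> r (x - z) <= r (x - y) + r (y - z).
Proof. by case=> _ hD _; have := hD (x - y) (y - z) I I; rewrite addrA subrK. Qed.

Lemma seminorm_onS (S : set V) (r : V -> R) :
  seminorm_on [set: V] r -> seminorm_on S r.
Proof. by case=> h0 hD hZ; split=> *; [apply: h0 | apply: hD | apply: hZ]. Qed.

Lemma subspaceB (S : set V) x y : is_subspace S -> S x -> S y -> S (x - y).
Proof. by case=> _ hD hZ Sx Sy; rewrite -scaleN1r; apply: hD => //; apply: hZ. Qed.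

Lemma sn_nbhsS (S T : set V) (K : Type) (r : K -> V -> R) x A :
  S `<=` T -> sn_nbhs T r x A -> sn_nbhs S r x A.
Proof.
move=> ST [F [fF [e [he hA]]]]; exists F; split=> //.
by exists e; split=> // y /ST; apply: hA.
Qed.

Lemma eventually_all_seq (K : eqType) (r : K -> nat -> R) :
  (forall k (e : R), 0 < e -> exists N, forall l, (N <= l)%N -> r k l < e) ->
  forall (s : seq K) (e : R), 0 < e ->
    exists N, forall l, (N <= l)%N -> forall k, k \in s -> r k l < e.
Proof.
move=> hr; elim=> [|a s IH] e he; first by exists 0%N.
have [N1 h1] := hr a e he; have [N2 h2] := IH e he.
exists (maxn N1 N2) => l; rewrite geq_max => /andP[l1 l2] k.
by rewrite in_cons => /orP[/eqP-> | ks]; [exact: h1 | exact: h2].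
Qed.

Lemma continuous_seminorm_cvg (K : eqType) (p : K -> V -> R) (r : V -> R)
    (u : nat -> V) x :
  seminorm_on [set: V] r -> sn_continuous_real [set: V] p r ->
  (forall n (e : R), 0 < e -> exists N, forall k, (N <= k)%N -> p n (u k - x) < e) ->
  forall e : R, 0 < e -> exists N, forall k, (N <= k)%N -> r (u k - x) < e.
Proof.
move=> hr hc hu e he.
have [F [/finite_seqP[s ->] [d [dp hd]]]] := hc 0 I e he.
have [N hN] := eventually_all_seq hu s dp.
exists N => k kN; have := hd (u k - x) I.
rewrite !subr0 (seminorm0 hr) subr0 ger0_norm; last by case: hr => ->.
by apply=> n ns; apply: hN.
Qed.

(* The identity map from the topology of [r'] to that of [r] is continuous at 0. *)
Definition dominated (K K' : Type) (r : K -> V -> R) (r' : K' -> V -> R) : Prop :=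
  forall k (e : R), 0 < e -> exists G : set K', finite_set G /\
    exists d : R, 0 < d /\ forall y, (forall m, G m -> r' m y < d) -> r k y < e.

Lemma dominated_seq (K : eqType) (K' : Type) (r : K -> V -> R) (r' : K' -> V -> R) :
  dominated r r' -> forall (s : seq K) (e : R), 0 < e ->
  exists G : set K', finite_set G /\
    exists d : R, 0 < d /\ forall y, (forall m, G m -> r' m y < d) ->
      forall k, k \in s -> r k y < e.
Proof.
move=> hd; elim=> [|a s IH] e he.
  by exists set0; split; [exact: finite_set0 | exists 1].
have [G1 [fG1 [d1 [d1p h1]]]] := hd a e he.
have [G2 [fG2 [d2 [d2p h2]]]] := IH e he.
exists (G1 `|` G2); split; first by rewrite finite_setU.
exists (Num.min d1 d2); split; first by rewrite lt_min d1p d2p.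
move=> y hy k; rewrite in_cons => /orP[/eqP-> | ks].
  by apply: h1 => m Gm; have /(_ (or_introl Gm)) := hy m; rewrite lt_min => /andP[].
by apply: h2 => // m Gm; have /(_ (or_intror Gm)) := hy m; rewrite lt_min => /andP[].
Qed.

Lemma dominated_nbhs (K : eqType) (K' : Type) (r : K -> V -> R) (r' : K' -> V -> R)
    (S : set V) x A :
  dominated r r' -> sn_nbhs S r x A -> sn_nbhs S r' x A.
Proof.
move=> hd [F [/finite_seqP[s ->] [e [he hA]]]].
have [G [fG [d [dp h]]]] := dominated_seq hd s he.
exists G; split=> //; exists d; split=> // y Sy hy.
by apply: hA => // n ns; apply: h.
Qed.

Lemma dominated_sn_open (K : eqType) (K' : Type) (r : K -> V -> R)
    (r' : K' -> V -> R) (S A : set V) :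
  dominated r r' -> sn_open S r A -> sn_open S r' A.
Proof. by move=> hd [AS hA]; split=> // x Ax; exact: dominated_nbhs (hA x Ax). Qed.

(* The unit ball of [r n] is [r]-open, so it contains an [r']-neighbourhood of
   0; homogeneity of the seminorms rescales this to every radius [e]. *)
Lemma dominated_of_sn_open (K K' : Type) (r : K -> V -> R) (r' : K' -> V -> R) :
  (forall n, seminorm_on [set: V] (r n)) ->
  (forall m, seminorm_on [set: V] (r' m)) ->
  (forall A, sn_open [set: V] r A -> sn_open [set: V] r' A) -> dominated r r'.
Proof.
move=> hr hr' hopen n e he.
pose ball := fun y => r n y < 1.
have ball_open : sn_open [set: V] r ball.
  split=> // y0 By0; exists [set n]; split; first exact: finite_set1.
  exists (1 - r n y0); split; first by rewrite subr_gt0.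
  move=> y _ /(_ n erefl) hy; rewrite /ball.
  by have := seminormB_le y y0 0 (hr n); rewrite !subr0; lra.
have [_ /(_ 0)] := hopen ball ball_open.
case=> [|G [fG [d [dp hG]]]]; first by rewrite /ball seminorm0.
exists G; split=> //; exists (d * e); split; first exact: mulr_gt0.
have scale_lt (s : V -> R) y c : seminorm_on [set: V] s ->
    (s (e^-1 *: y) < c) = (s y < e * c).
  case=> _ _ ->; rewrite // ger0_norm ?invr_ge0 ?ltW //.
  by rewrite -(ltr_pM2l he) mulrA divff ?gt_eqF // mul1r.
move=> y hy; suff : ball (e^-1 *: y) by rewrite /ball scale_lt // mulr1.
by apply: hG => // m Gm; rewrite subr0 scale_lt // mulrC; apply: hy.
Qed.

Lemma dominated_fam_union (K K' L : Type) (p : K -> V -> R) (p' : K' -> V -> R)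
    (r : L -> V -> R) :
  dominated p p' -> dominated (fam_union p r) (fam_union p' r).
Proof.
move=> hd [n|i] e he /=.
  have [G [fG [d [dp h]]]] := hd n e he.
  exists [set inl m | m in G]; split; first exact: finite_image.
  by exists d; split=> // y hy; apply: h => m Gm; apply: (hy (inl m)); exists m.
exists [set inr i]; split; first exact: finite_set1.
by exists e; split=> // y /(_ (inr i) erefl).
Qed.

Lemma dominated_inl (K L : Type) (p : K -> V -> R) (r : L -> V -> R) :
  dominated p (fam_union p r).
Proof.
move=> n e he; exists [set inl n]; split; first exact: finite_set1.
by exists e; split=> // y /(_ (inl n) erefl).
Qed.

End Seminorms.

Section SupSeminorm.
Variables (R : realType) (V : lmodType R) (I : Type) (J : I -> Type).
Variables (q : forall i, J i -> V -> R) (w : forall i, J i -> R).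
Arguments q : clear implicits.
Arguments w : clear implicits.

Lemma q_sup_ub i j x : X_I w q x -> w i j * q i j x <= q_sup w q i x.
Proof.
move=> /(_ i) [M hM]; apply: sup_upper_bound; last by exists j.
by split; [exists (w i j * q i j x), j | exists M => _ [k _ <-]].
Qed.

Lemma q_sup_le i x M :
  0 <= M -> (forall j, w i j * q i j x <= M) -> q_sup w q i x <= M.
Proof.
move=> M0 hM.
have [ne | empty] := pselect (range (fun j => w i j * q i j x) !=set0).
  by apply: ge_sup => // _ [j _ <-].
by rewrite /q_sup sup_out // => -[].
Qed.

Hypothesis hq : forall i (j : J i), seminorm_on [set: V] (q i j).
Hypothesis hw : forall i (j : J i), 0 <= w i j.

Lemma weighted_seminorm_ge0 i j x : 0 <= w i j * q i j x.
Proof. by apply: mulr_ge0 => //; case: (hq j) => ->. Qed.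

Lemma weighted_seminormD_le i j x y :
  w i j * q i j (x + y) <= w i j * q i j x + w i j * q i j y.
Proof. by rewrite -mulrDr; apply: ler_wpM2l => //; case: (hq j) => _ ->. Qed.

Lemma q_sup_ge0 i x : 0 <= q_sup w q i x.
Proof.
rewrite /q_sup.
have [hs | /sup_out ->] // := pselect (has_sup (range (fun j => w i j * q i j x))).
have [_ [j _ _]] := hs.1.
apply: le_trans (weighted_seminorm_ge0 j x) _.
by apply: (sup_upper_bound hs); exists j.
Qed.

Lemma X_I_subspace : is_subspace (X_I w q).
Proof.
split.
- by move=> i; exists 0 => j; rewrite seminorm0 // mulr0.
- move=> x y hx hy i; have [M1 h1] := hx i; have [M2 h2] := hy i.
  exists (M1 + M2) => j.
  exact: le_trans (weighted_seminormD_le j x y) (lerD (h1 j) (h2 j)).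
- move=> a x hx i; have [M h] := hx i; exists (`|a| * M) => j.
  by case: (hq j) => _ _ ->; rewrite // mulrCA; apply: ler_wpM2l.
Qed.

Lemma q_sup_seminorm i : seminorm_on (X_I w q) (q_sup w q i).
Proof.
have [_ _ XZ] := X_I_subspace.
split=> [x _ | x y hx hy | a x hx]; first exact: q_sup_ge0.
  apply: q_sup_le; first by apply: addr_ge0; apply: q_sup_ge0.
  move=> j; apply: le_trans (weighted_seminormD_le j x y) _.
  exact: lerD (q_sup_ub j hx) (q_sup_ub j hy).
apply/eqP; rewrite eq_le; apply/andP; split.
  apply: q_sup_le; first by apply: mulr_ge0 => //; apply: q_sup_ge0.
  move=> j; case: (hq j) => _ _ ->; rewrite // mulrCA.
  by apply: ler_wpM2l => //; apply: q_sup_ub.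
have [-> | a0] := eqVneq a 0; first by rewrite normr0 mul0r q_sup_ge0.
have na : 0 < `|a| by rewrite normr_gt0.
rewrite -ler_pdivlMl //; apply: q_sup_le.
  by apply: mulr_ge0; [rewrite invr_ge0 ltW | apply: q_sup_ge0].
move=> j; rewrite ler_pdivlMl //; apply: le_trans (q_sup_ub j (XZ a x hx)).
by case: (hq j) => _ _ ->; rewrite // mulrCA.
Qed.

Section CauchyLimit.
Variables (P : eqType) (p : P -> V -> R).
Hypothesis hc : forall i (j : J i), sn_continuous_real [set: V] p (q i j).
Variables (u : nat -> V) (x : V).
Hypothesis Xu : forall k, X_I w q (u k).
Hypothesis u_cauchy : forall i (e : R), 0 < e -> exists N, forall k l,
  (N <= k)%N -> (N <= l)%N -> q_sup w q i (u k - u l) < e.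
Hypothesis u_cvg : forall n (e : R), 0 < e ->
  exists N, forall k, (N <= k)%N -> p n (u k - x) < e.

Lemma weighted_tail_le i (e : R) : 0 < e ->
  exists N, forall k, (N <= k)%N -> forall j, w i j * q i j (u k - x) <= e.
Proof.
move=> he; have [N hN] := u_cauchy i he.
exists N => k kN j; apply/ler_addgt0Pr => d dp.
have cp : 0 < w i j + 1 by have := hw j; lra.
have [N' hN'] := continuous_seminorm_cvg (hq j) (hc j) u_cvg (divr_gt0 dp cp).
pose l := maxn N N'.
have close_kl : w i j * q i j (u k - u l) < e.
  apply: le_lt_trans (q_sup_ub j (subspaceB X_I_subspace (Xu k) (Xu l))) _.
  exact: hN k l kN (leq_maxl _ _).
have small_l : w i j * q i j (u l - x) < d.
  have := hN' l (leq_maxr _ _); rewrite ltr_pdivlMr // mulrC.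
  have q0 : 0 <= q i j (u l - x) by case: (hq j) => ->.
  have : w i j * q i j (u l - x) <= (w i j + 1) * q i j (u l - x).
    by apply: ler_wpM2r => //; lra.
  lra.
have := weighted_seminormD_le j (u k - u l) (u l - x).
rewrite addrA subrK; lra.
Qed.

Lemma X_I_cauchy_limit : X_I w q x.
Proof.
move=> i; have [N hN] := weighted_tail_le i ltr01.
exists (q_sup w q i (u N) + 1) => j.
have := weighted_seminormD_le j (u N) (x - u N).
rewrite addrC subrK seminormBC //.
by have := hN N (leqnn N) j; have := q_sup_ub j (Xu N); lra.
Qed.

Lemma q_sup_cauchy_cvg i (e : R) : 0 < e ->
  exists N, forall k, (N <= k)%N -> q_sup w q i (u k - x) < e.
Proof.
move=> he; have [N hN] := weighted_tail_le i (divr_gt0 he (ltr0n _ 2)).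
exists N => k kN; apply: le_lt_trans (q_sup_le _ (hN k kN)) _; lra.
Qed.

End CauchyLimit.

Lemma X_I_complete (P : eqType) (p : P -> V -> R) :
  (forall i (j : J i), sn_continuous_real [set: V] p (q i j)) ->
  sn_complete [set: V] p -> sn_complete (X_I w q) (fam_union p (q_sup w q)).
Proof.
move=> hc hcomp u Xu u_cauchy.
have [x [_ u_cvg]] := hcomp u (fun=> Logic.I) (fun n => u_cauchy (inl n)).
have u_cauchy_q : forall i (e : R), 0 < e -> exists N, forall k l,
    (N <= k)%N -> (N <= l)%N -> q_sup w q i (u k - u l) < e.
  by move=> i; exact: u_cauchy (inr i).
exists x; split; first exact (X_I_cauchy_limit hc Xu u_cauchy_q u_cvg).
case=> [n | i] e he /=; first exact: u_cvg.
exact: (q_sup_cauchy_cvg hc Xu u_cauchy_q u_cvg i he).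
Qed.

End SupSeminorm.

Theorem proposition2p1 (R : realType) (X : lmodType R)
    (P : countType) (p : P -> X -> R)
    (I : countType) (J : I -> Type)
    (q : forall i, J i -> X -> R) (w : forall i, J i -> R) :
  frechet_on [set: X] p ->
  (forall i (j : J i), seminorm_on [set: X] (q i j)) ->
  (forall i (j : J i), sn_continuous_real [set: X] p (q i j)) ->
  (forall i (j : J i), 0 <= w i j) ->
  [/\ is_subspace (X_I w q),
      (forall i, seminorm_on (X_I w q) (q_sup w q i)),
      frechet_on (X_I w q) (fam_union p (q_sup w q)),
      (forall (P' : countType) (p' : P' -> X -> R),
          (forall n, seminorm_on [set: X] (p' n)) ->
          (forall A : set X, sn_open [set: X] p A <-> sn_open [set: X] p' A) ->
          forall A : set X,
            sn_open (X_I w q) (fam_union p (q_sup w q)) A <->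
            sn_open (X_I w q) (fam_union p' (q_sup w q)) A) &
      sn_continuous (X_I w q) [set: X] (fam_union p (q_sup w q)) p id].
Proof.
move=> [_ hp hsep hcomp] hq hc hw.
have XI_sub := X_I_subspace hq hw.
have q_sup_sn := q_sup_seminorm hq hw.
split=> //.
- split=> //; last exact (X_I_complete hq hw hc hcomp).
    by case=> [n | i] /=; [apply: seminorm_onS; exact: hp | exact: q_sup_sn].
  by move=> x _ h0; apply: hsep => // n; exact: (h0 (inl n)).
- move=> P' p' hp' hopen A.
  have dp := dominated_of_sn_open hp hp' (fun A => (hopen A).1).
  have dp' := dominated_of_sn_open hp' hp (fun A => (hopen A).2).
  split; apply: dominated_sn_open.
    exact: dominated_fam_union dp.
  exact: dominated_fam_union dp'.
- split=> // x _ B hB; apply: (sn_nbhsS (T := [set: X])) => //.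
  exact: dominated_nbhs (dominated_inl p (q_sup w q)) hB.
Qed.
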